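(* Let $p$ be a prime and let $(G,H,T)$ be an RCC loop folder of order $p$ with $\langle T\rangle=G$. Then $G$ is abelian.
   Context: A loop folder is a triple $(G,H,T)$ with $G$ a finite group, $H\le G$, and $T\subseteq G$ with $1\in T$ such that $T$ is a set of representatives for the right cosets $H^g\backslash G$ for every $g\in G$. It is an RCC loop folder if moreover $T$ is invariant under conjugation by $G$. Its order is $|T|$. *)

From mathcomp Require Import all_boot all_fingroup.
Set Implicit Arguments. Unset Strict Implicit. Unset Printing Implicit Defensive.
Local Open Scope group_scope.

Definition right_transversal (gT : finGroupType) (G H : {set gT}) (T : {set gT}) :=
  T \subset G /\ forall x, x \in G -> #|(H :* x) :&: T| = 1%N.

Definition loop_folder (gT : finGroupType) (G H : {group gT}) (T : {set gT}) :=
  [/\ H \subset G, 1 \in T &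
      forall g, g \in G -> right_transversal G (H :^ g) T].

Definition RCC_loop_folder (gT : finGroupType) (G H : {group gT}) (T : {set gT}) :=
  loop_folder G H T /\ forall g, g \in G -> T :^ g = T.

From mathcomp Require Import all_boot all_fingroup all_solvable.
Set Implicit Arguments. Unset Strict Implicit. Unset Printing Implicit Defensive.
Local Open Scope group_scope.

(* As T is a right transversal of H containing 1, |G : H| = p and
   T :&: H = 1.  As T is a normal subset, the class of any u in T^# lies in
   T^#, so |G : C_G(u)| < p; hence H C_G(u) = G and |C_G(u) : C_H(u)| = p.
   Then C_G(u) normalises C_H(u), which therefore lies in every conjugate of
   H: C_H(u) is the core N of H in G, and H :&: H^x = N for all x outside H.
   So for t in T^#, C_G(t), of order p|N|, and the union of the conjugates
   (H :\: N)^s, s in T, of order p(|H| - |N|), are disjoint and cover G.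
   No element of T^# is conjugate to an element of H, so T^# lies in C_G(t). *)

Section RightTransversal.

Variables (gT : finGroupType) (G H : {group gT}) (T : {set gT}).
Hypothesis sTG : T \subset G.
Hypothesis trT : forall x, x \in G -> #|(H :* x) :&: T| = 1%N.

Lemma transversal_inj s r : s \in T -> r \in T -> s * r^-1 \in H -> s = r.
Proof.
move=> sT rT sr_H; have rG := subsetP sTG r rT.
have /eqP/cards1P[a Ha] := trT rG.
have HrT x : x \in T -> x * r^-1 \in H -> x = a.
  by move=> xT xr_H; apply/set1P; rewrite -Ha inE mem_rcoset xr_H.
by rewrite (HrT s) // (HrT r) ?mulgV.
Qed.

Lemma transversal_exists x : x \in G -> exists2 u, u \in T & x * u^-1 \in H.
Proof.
move=> xG; have /eqP/cards1P[a Ha] := trT xG.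
have /setIP[] : a \in (H :* x) :&: T by rewrite Ha set11.
by rewrite mem_rcoset => ax_H aT; exists a; rewrite // -groupV invMg invgK.
Qed.

Lemma index_transversal : #|G : H| = #|T|.
Proof.
rewrite /indexg; have -> : rcosets H G = [set H :* u | u in T].
  apply/setP=> X; apply/imsetP/imsetP => [[x xG ->]|[u uT ->]].
    have [u uT xu_H] := transversal_exists xG.
    by exists u => //; rewrite rcosetE; apply/rcoset_eqP; rewrite mem_rcoset.
  by exists u; rewrite ?rcosetE ?(subsetP sTG).
apply: card_in_imset => u v uT vT eq_uv; apply: transversal_inj => //.
by rewrite -mem_rcoset -eq_uv rcoset_refl.
Qed.

End RightTransversal.

Lemma prime_index_norm (gT : finGroupType) (B C : {group gT}) u :
  B \subset C -> prime #|C : B| -> u \in C -> u \notin B -> u \in 'N(B) ->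
  C \subset 'N(B).
Proof.
move=> sBC prCB uC uB nBu.
have [_ maxB] := maxgroupP (p_index_maximal sBC prCB).
have sBN : B \subset 'N_C(B) by rewrite subsetI sBC normG.
have [eqNC | ltNC] := eqVproper (subsetIl C 'N(B)); first by rewrite -eqNC subsetIr.
by rewrite -(maxB _ ltNC sBN) inE uC nBu in uB.
Qed.

Section RCCTransversal.

Variables (gT : finGroupType) (G H : {group gT}) (T : {set gT}).
Hypotheses (sHG : H \subset G) (T1 : 1 \in T) (sTG : T \subset G).
Hypothesis trT : forall x, x \in G -> #|(H :* x) :&: T| = 1%N.
Hypothesis nTG : forall g, g \in G -> T :^ g = T.
Hypothesis prT : prime #|T|.

Lemma transversal_meetH u : u \in T -> u \in H -> u = 1.
Proof. by move=> uT uH; apply: (transversal_inj sTG trT) => //; rewrite invg1 mulg1. Qed.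

Lemma transversalJ u g : u \in T -> g \in G -> u ^ g \in T.
Proof. by move=> uT gG; rewrite -(nTG gG) memJ_conjg. Qed.

Lemma index_cent1_transversal u : u \in T -> u != 1 -> #|G : 'C_G[u]| < #|T|.
Proof.
move=> uT nt_u; rewrite index_cent1 (cardsD1 1 T) T1 add1n ltnS subset_leq_card //.
apply/subsetP=> _ /imsetP[g gG ->].
by rewrite !inE conjg_eq1 nt_u transversalJ.
Qed.

Lemma mul_cent1_transversal u : u \in T -> u != 1 -> H * 'C_G[u] = G.
Proof.
move=> uT nt_u; apply: coprime_index_mulG; rewrite ?subsetIl //.
rewrite (index_transversal sTG trT) prime_coprime // gtnNdvd ?indexg_gt0 //.
exact: index_cent1_transversal.
Qed.

Lemma index_cent1_meet u : u \in T -> u != 1 -> #|'C_G[u] : 'C_H[u]| = #|T|.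
Proof.
move=> uT nt_u; have -> : 'C_H[u] = 'C_G[u] :&: H.
  by rewrite setIAC (setIidPr sHG).
by rewrite indexgI -indexMg mul_cent1_transversal // (index_transversal sTG trT).
Qed.

Lemma meet_conj_cent1 u : u \in T -> H :&: H :^ u \subset 'C[u].
Proof.
move=> uT; apply/subsetP=> c /setIP[cH]; rewrite mem_conjg => cuH.
have cG := subsetP sHG c cH.
apply/cent1P/commute_sym/commgP/conjg_fixP.
apply: (transversal_inj sTG trT); rewrite ?transversalJ //.
have -> : u ^ c * u^-1 = c^-1 * c ^ u^-1 by rewrite !conjgE invgK !mulgA.
by rewrite groupM ?groupV.
Qed.

Lemma cent1_transversal_sub_conj u x :
  u \in T -> u != 1 -> x \in G -> 'C_H[u] \subset H :^ x.
Proof.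
move=> uT nt_u xG; set C := 'C_G[u].
have nBC : C \subset 'N('C_H[u]).
  apply: (@prime_index_norm _ _ _ u); rewrite ?index_cent1_meet //.
  - by rewrite setSI.
  - by rewrite inE (subsetP sTG) ?cent1id.
  - by apply: contra nt_u => /setIP[/(transversal_meetH uT) ->].
  by apply: (subsetP (cent_sub _)); rewrite -sub_cent1 subsetIr.
move: xG; rewrite -(mul_cent1_transversal uT nt_u) => /mulsgP[h c hH cC ->].
by rewrite conjsgM (conjGid hH) -(normP (subsetP nBC c cC)) conjSg subsetIl.
Qed.

Lemma cent1_transversal_gcore u : u \in T -> u != 1 -> 'C_H[u] = gcore H G.
Proof.
move=> uT nt_u; apply/eqP; rewrite eqEsubset; apply/andP; split.
  by apply/bigcapsP=> x xG; apply: cent1_transversal_sub_conj.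
rewrite subsetI gcore_sub (subset_trans _ (meet_conj_cent1 uT)) //.
by rewrite subsetI gcore_sub bigcap_inf ?(subsetP sTG).
Qed.

Lemma meet_conj_gcore x : x \in G -> x \notin H -> H :&: H :^ x = gcore H G.
Proof.
move=> xG xH; have [u uT xu_H] := transversal_exists trT xG.
have nt_u : u != 1 by apply: contraNneq xH => u1; rewrite u1 invg1 mulg1 in xu_H.
apply/eqP; rewrite eqEsubset subsetI gcore_sub bigcap_inf // andbT.
have -> : H :^ x = H :^ u by rewrite -{1}(mulgKV u x) conjsgM conjGid.
by rewrite -(cent1_transversal_gcore uT nt_u) subsetI subsetIl meet_conj_cent1.
Qed.

Lemma card_conj_transversal :
  #|[set h ^ s | h in H :\: gcore H G, s in T]| = ((#|H| - #|gcore H G|) * #|T|)%N.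
Proof.
rewrite curry_imset2X card_in_imset; last first.
  move=> [h s] [h' s'] /setXP[/setDP[hH _] sT] /setXP[/setDP[h'H h'N] s'T] /= eq_hs.
  have [eq_ss' | ne_ss'] := eqVneq s s'.
    by rewrite -eq_ss' in eq_hs *; rewrite (conjg_inj _ eq_hs).
  have ss'G : s * s'^-1 \in G by rewrite groupM ?groupV ?(subsetP sTG).
  have ss'H : s * s'^-1 \notin H.
    by apply: contra ne_ss' => /(transversal_inj sTG trT sT s'T)->.
  have h'E : h' = h ^ (s * s'^-1) by rewrite conjgM eq_hs conjgK.
  by rewrite -(meet_conj_gcore ss'G ss'H) inE h'H h'E memJ_conjg hH in h'N.
by rewrite cardsX cardsD (setIidPr (gcore_sub H G)).
Qed.

Lemma card_cent1_transversal t :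
  t \in T -> t != 1 -> #|'C_G[t]| = (#|gcore H G| * #|T|)%N.
Proof.
move=> tT nt_t; rewrite -(index_cent1_meet tT nt_t) -(cent1_transversal_gcore tT nt_t).
by rewrite Lagrange ?setSI.
Qed.

Lemma cent1_conj_transversal_cover t : t \in T -> t != 1 ->
  'C_G[t] :|: [set h ^ s | h in H :\: gcore H G, s in T] = G.
Proof.
move=> tT nt_t; set I := [set _ | _ in _, _ in _].
have sIG : I \subset G.
  apply/subsetP=> _ /imset2P[h s /setDP[hH _] sT ->].
  by rewrite groupJ ?(subsetP sHG h hH) ?(subsetP sTG s sT).
have tiCI : 'C_G[t] :&: I = set0.
  apply/setP=> y; rewrite inE in_set0; apply/andP=> -[/setIP[_ yCt]].
  case/imset2P=> h s /setDP[hH hN] sT def_y; case/negP: hN.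
  have sG : s \in G := subsetP sTG s sT.
  have tsT : t ^ s^-1 \in T by rewrite transversalJ ?groupV.
  rewrite -(cent1_transversal_gcore tsT) ?conjg_eq1 // inE hH cent1J mem_conjgV.
  by rewrite -def_y.
have cardCI : #|'C_G[t] :|: I| = #|'C_G[t]| + #|I|.
  by rewrite -cardsUI tiCI cards0 addn0.
apply/eqP; rewrite eqEcard subUset subsetIl sIG cardCI /=.
rewrite card_cent1_transversal // card_conj_transversal -mulnDl.
rewrite subnKC ?subset_leq_card ?gcore_sub //.
by rewrite -(Lagrange sHG) (index_transversal sTG trT).
Qed.

Lemma transversal_abelian : abelian T.
Proof.
apply/centsP=> r rT t tT; have [-> | nt_t] := eqVneq t 1; first exact: commute1.
apply/cent1P.
have [-> | nt_r] := eqVneq r 1; first exact: group1.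
move: (subsetP sTG r rT); rewrite -(cent1_conj_transversal_cover tT nt_t).
case/setUP=> [/setIP[] // | /imset2P[h s /setDP[hH _] sT def_r]].
have rsT : r ^ s^-1 \in T by rewrite transversalJ ?groupV ?(subsetP sTG s sT).
have /eqP : r ^ s^-1 = 1 by apply: transversal_meetH; rewrite // def_r conjgK.
by rewrite conjg_eq1 (negPf nt_r).
Qed.

End RCCTransversal.

Theorem proposition4p3 (gT : finGroupType) (p : nat) (G H : {group gT}) (T : {set gT}) :
  prime p -> RCC_loop_folder G H T -> #|T| = p -> <<T>> = G -> abelian G.
Proof.
move=> pr_p [[sHG T1 trG] nTG] cardT genT.
have [sTG trHT] := trG 1 (group1 G); rewrite conjsg1 in trHT.
rewrite -genT abelian_gen.
by apply: (transversal_abelian sHG T1 sTG trHT nTG); rewrite cardT.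
Qed.
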